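(* Let $K\subseteq\mathbb{R}^n$ be a proper cone and $A\in\mathbb{R}^{n\times n}$ nonsingular. Let $A=U-V$ be a convergent $K$-regular splitting and let $U=F-G$ be a convergent $K$-weak regular splitting of type II such that $VF^{-1}G=GF^{-1}V$. Then the stationary two-stage iterative method is convergent for any initial vector $x_0$; that is, for every positive integer $s$, the iteration matrix $$T_{s}=(F^{-1}G)^{s}+\sum_{j=0}^{s-1}(F^{-1}G)^{j}F^{-1}V$$ satisfies $\rho(T_s)<1$, so that the iterates $x_{k+1}=T_s x_k + \sum_{j=0}^{s-1}(F^{-1}G)^jF^{-1}b$ converge to $A^{-1}b$ for every $x_0$ and every $b$.
   Context: A proper cone $K\subseteq\mathbb{R}^n$ is a closed, convex, pointed ($K\cap(-K)=\{0\}$), solid (nonempty interior) cone. For $M\in\mathbb{R}^{n\times n}$, $M\geq_K 0$ means $MK\subseteq K$, and $M\geq_K N$ means $M-N\geq_K 0$. A splitting $A=U-V$ (with $U$ nonsingular) is $K$-regular if $U^{-1}\geq_K 0$ and $V\geq_K 0$; it is a $K$-weak regular splitting of type I if $U^{-1}\geq_K0$ and $U^{-1}V\geq_K 0$, and of type II if $U^{-1}\geq_K 0$ and $VU^{-1}\geq_K 0$. A splitting $A=U-V$ is convergent if $\rho(U^{-1}V)<1$, where $\rho$ denotes spectral radius. The stationary two-stage iterative method for $Ax=b$ uses the outer splitting $A=U-V$ and inner splitting $U=F-G$ with a fixed number $s\ge 1$ of inner iterations. *)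

From HB Require Import structures.
From mathcomp Require Import all_boot all_order all_algebra.
From mathcomp Require Import all_classical all_reals.
From mathcomp Require Import all_analysis.
From mathcomp.real_closed Require Import complex.
Set Implicit Arguments. Unset Strict Implicit. Unset Printing Implicit Defensive.
Import Order.TTheory GRing.Theory Num.Theory.
Import numFieldNormedType.Exports.
Local Open Scope ring_scope.
Local Open Scope classical_set_scope.

Section Defs.
Variable R : realType.

Definition is_cone n (K : set 'cV[R]_n) : Prop :=
  forall (a : R) (x : 'cV[R]_n), 0 <= a -> K x -> K (a *: x).
Definition is_convex n (K : set 'cV[R]_n) : Prop :=
  forall (t : R) (x y : 'cV[R]_n), 0 <= t -> t <= 1 -> K x -> K y ->
    K (t *: x + (1 - t) *: y).
Definition is_pointed n (K : set 'cV[R]_n) : Prop :=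
  forall x : 'cV[R]_n, K x -> K (- x) -> x = 0.
Definition is_solid n (K : set 'cV[R]_n) : Prop :=
  exists x : 'cV[R]_n, (K°) x.
Definition proper_cone n (K : set 'cV[R]_n) : Prop :=
  [/\ is_cone K, closed K, is_convex K, is_pointed K & is_solid K].

Definition K_nonneg n (K : set 'cV[R]_n) (M : 'M[R]_n) : Prop :=
  forall x, K x -> K (M *m x).

Definition spectral_radius n (M : 'M[R]_n) : R :=
  sup [set r : R | exists lam : R[i],
         root (char_poly (map_mx (fun x : R => x%:C%C) M)) lam /\ (r%:C)%C = `|lam|].

Definition K_regular_splitting n (K : set 'cV[R]_n) (A U V : 'M[R]_n) : Prop :=
  [/\ A = U - V, U \in unitmx, K_nonneg K (invmx U) & K_nonneg K V].
Definition K_weak_regular_splitting_II n (K : set 'cV[R]_n) (A U V : 'M[R]_n)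
  : Prop :=
  [/\ A = U - V, U \in unitmx, K_nonneg K (invmx U) & K_nonneg K (V *m invmx U)].
Definition convergent_splitting n (U V : 'M[R]_n) : Prop :=
  spectral_radius (invmx U *m V) < 1.

Definition two_stage_T n (V F G : 'M[R]_n) (s : nat) : 'M[R]_n :=
  (invmx F *m G) ^+ s + \sum_(j < s) (invmx F *m G) ^+ j *m invmx F *m V.

End Defs.

(* Put P = G F^-1, Q = V F^-1, X = P^s + \sum_(j < s) P^j Q and
   M = F^-1 \sum_(j < s) P^j.  Then F T_s = X F, so T_s and X have the same
   spectral radius, and the commutation hypothesis gives A M = 1 - X.  Since
   rho(F^-1 G) < 1, M is invertible, and M, X >=_K 0: A = M^-1 - (M^-1 - A)
   is a K-weak regular splitting of type II.  The Neumann series of the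
   convergent K-regular splitting A = U - V shows A^-1 >=_K 0.  For y in K the
   vectors M (\sum_(j < k) X^j) y then increase in the cone order and stay
   below A^-1 y; a closed pointed cone in R^n is normal, so they converge and
   X^k y -> 0.  As K spans R^n, every orbit of X tends to 0, i.e. rho(X) < 1. *)

From HB Require Import structures.
From mathcomp Require Import all_boot all_order all_algebra.
From mathcomp Require Import all_classical all_reals.
From mathcomp Require Import all_analysis.
From mathcomp.real_closed Require Import complex.
From mathcomp Require Import ring lra.
Set Implicit Arguments. Unset Strict Implicit. Unset Printing Implicit Defensive.
Import Order.TTheory GRing.Theory Num.Theory.
Import numFieldNormedType.Exports.
Local Open Scope ring_scope.
Local Open Scope classical_set_scope.

Local Notation normc := Normc.normc.

Section MatrixNorm.
Variable R : realDomainType.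

Lemma mx_norm_entry_le m p (x : 'M[R]_(m, p)) i j : `|x i j| <= `|x|.
Proof.
rewrite [leRHS]/Num.Def.normr /= mx_normrE; apply/bigmax_geP; right => /=.
by exists (i, j).
Qed.

Lemma mx_norm_le m p (x : 'M[R]_(m, p)) b :
  0 <= b -> (forall i j, `|x i j| <= b) -> `|x| <= b.
Proof.
move=> b0 xb; rewrite [leLHS]/Num.Def.normr /= mx_normrE.
by apply/bigmax_leP; split.
Qed.

Lemma mx_norm_lt m p (x : 'M[R]_(m, p)) b :
  0 < b -> (forall i j, `|x i j| < b) -> `|x| < b.
Proof.
move=> b0 xb; rewrite [ltLHS]/Num.Def.normr /= mx_normrE.
by apply/bigmax_ltP; split.
Qed.

Lemma mx_norm_trmx m p (x : 'M[R]_(m, p)) : `|x^T| = `|x|.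
Proof.
apply/le_anti/andP; split; apply: mx_norm_le => // i j.
  by rewrite mxE mx_norm_entry_le.
have -> : x i j = x^T j i by rewrite mxE.
exact: mx_norm_entry_le.
Qed.

Lemma mx_norm_mulmx_le m n p (M : 'M[R]_(m, n)) (N : 'M[R]_(n, p)) :
  `|M *m N| <= n%:R * `|M| * `|N|.
Proof.
apply: mx_norm_le => [|i j]; first by rewrite !mulr_ge0.
rewrite mxE; apply: le_trans (ler_norm_sum _ _ _) _.
rewrite -mulrA mulr_natl -[X in _ *+ X]card_ord -sumr_const.
by apply: ler_sum => k _; rewrite normrM ler_pM ?mx_norm_entry_le.
Qed.

End MatrixNorm.

Section Convergence.
Variable R : realType.

Lemma cvg0_mulmx m n p (M : 'M[R]_(m, n)) (u : nat -> 'M[R]_(n, p)) :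
  u @ \oo --> (0 : 'M[R]_(n, p)) -> M *m u k @[k --> \oo] --> (0 : 'M[R]_(m, p)).
Proof.
move=> /norm_cvg0P u0; apply/norm_cvg0P.
apply: (@squeeze_cvgr _ _ _ _ (cst 0) (fun k => n%:R * `|M| * `|u k|)).
- by near=> k; rewrite normr_ge0 mx_norm_mulmx_le.
- exact: cvg_cst.
- by rewrite -(mulr0 (n%:R * `|M|)); apply: cvgMl_tmp.
Unshelve. all: by end_near.
Qed.

Lemma cvg0_entries m p (u : nat -> 'M[R]_(m, p)) :
  (forall i j, u k i j @[k --> \oo] --> 0) -> u @ \oo --> (0 : 'M[R]_(m, p)).
Proof.
move=> u0; apply/cvgr0Pnorm_lt => e e0.
have : \forall k \near \oo, forall ij : 'I_m * 'I_p, `|u k ij.1 ij.2| < e.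
  by apply: filter_forall => ij; move/cvgr0Pnorm_lt : (u0 ij.1 ij.2); apply.
by apply: filterS => k uk; apply: mx_norm_lt => // i j; apply: (uk (i, j)).
Qed.

Lemma cvg0_contraction (a b : nat -> R) (c : R) :
  (forall k, 0 <= a k) -> 0 <= c < 1 ->
  (forall k, a k.+1 <= c * a k + b k) -> b @ \oo --> 0 -> a @ \oo --> 0.
Proof.
move=> a0 /andP[c0 c1] a_rec /cvgr0Pnorm_lt b0; apply/cvgr0Pnorm_lt => e e0.
have d0 : 0 < e * (1 - c) / 2 by rewrite divr_gt0 // mulr_gt0 // subr_gt0.
have [N _ bN] := b0 _ d0.
have aN j : a (N + j)%N <= c ^+ j * a N + e / 2.
  elim: j => [|j IH]; first by rewrite addn0 expr0 mul1r lerDl ltW // divr_gt0.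
  rewrite addnS; apply: le_trans (a_rec _) _.
  have /= := bN (N + j)%N (leq_addr _ _); rewrite ltr_norml => /andP[_ bj].
  have := ler_wpM2l c0 IH; rewrite exprS -mulrA; nra.
have /cvgr0Pnorm_lt/(_ (e / 2)) : c ^+ j * a N @[j --> \oo] --> 0.
  by rewrite -(mul0r (a N)); apply: cvgMr_tmp; apply: cvg_expr; rewrite ger0_norm.
case=> [|M _ cM]; first by rewrite divr_gt0.
exists (N + M)%N => // k /= Nk; rewrite ger0_norm //.
have Nk' : (N <= k)%N by apply: leq_trans Nk; apply: leq_addr.
have /= := cM (k - N)%N; rewrite leq_subRL // => /(_ Nk); rewrite ltr_norml.
have := aN (k - N)%N; rewrite subnKC //; lra.
Qed.

End Convergence.

Section ComplexModulus.
Variable R : rcfType.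
Implicit Types z : R[i].

Lemma normc_ge0 z : 0 <= normc z.
Proof. by case: z => a b; apply: sqrtr_ge0. Qed.

Lemma normc_gt0 z : z != 0 -> 0 < normc z.
Proof.
by move=> z0; rewrite lt_def normc_ge0 andbT; apply: contra z0 => /eqP/Normc.eq0_normc ->.
Qed.

Lemma normc_real (x : R) : normc x%:C%C = `|x|.
Proof. by rewrite /= expr0n addr0 sqrtr_sqr. Qed.

Lemma normcX z k : normc (z ^+ k) = normc z ^+ k.
Proof.
elim: k => [|k IH]; first by rewrite !expr0 Normc.normc1.
by rewrite !exprS Normc.normcM IH.
Qed.

Lemma normc_sum_le (I : Type) (s : seq I) (F : I -> R[i]) :
  normc (\sum_(i <- s) F i) <= \sum_(i <- s) normc (F i).
Proof. exact: (@ler_norm_sum _ (Rcomplex R)). Qed.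

End ComplexModulus.

Section SpectralRadius.
Variable R : realType.
Local Notation Mc M := (map_mx (fun x : R => x%:C%C) M).

Lemma spectral_radius_ltP n (M : 'M[R]_n) r : 0 < r ->
  spectral_radius M < r <->
  (forall lam, root (char_poly (Mc M)) lam -> normc lam < r).
Proof.
(* [sup set0 = 0]: for [n = 0] there is no eigenvalue and [0 < r] is needed. *)
move=> r0; have [rs rsE] := closed_field_poly_normal (char_poly (Mc M)).
rewrite (monicP (char_poly_monic _)) scale1r in rsE.
pose S := [set x : R | exists lam : R[i],
  root (char_poly (Mc M)) lam /\ (x%:C)%C = `|lam|].
have SE x : S x <-> exists2 lam, lam \in rs & x = normc lam.
  split=> [[lam [+ /complexI ->]]|[lam lam_rs ->]].
    by rewrite rsE root_prod_XsubC; exists lam.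
  by exists lam; rewrite rsE root_prod_XsubC.
pose mx := \big[Num.max/0]_(z <- rs) normc z.
have S_mx : ubound S mx.
  by move=> _ /SE[z z_rs ->]; apply: le_bigmax_seq.
split=> [Mr lam | rs_r].
  rewrite rsE root_prod_XsubC => lam_rs; apply: le_lt_trans Mr.
  have Sl : S (normc lam) by apply/SE; exists lam.
  by apply: sup_upper_bound => //; split; [exists (normc lam) | exists mx].
have [S0|/set0P S_ne] := eqVneq S set0; first by rewrite /spectral_radius -/S S0 sup0.
apply: le_lt_trans (ge_sup S_ne S_mx) _.
rewrite /mx big_seq; apply: bigmax_lt => // z z_rs.
by apply: rs_r; rewrite rsE root_prod_XsubC.
Qed.

Section ComplexOrbits.
Variables (n : nat) (W : 'M[R[i]]_n).

Lemma orbit_normc_cvg0_factor (z : R[i]) (u : nat -> 'cV[R[i]]_n) :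
  normc z < 1 -> (forall k, u k.+1 = W *m u k) ->
  (forall i, normc (((W - z%:M) *m u k) i 0) @[k --> \oo] --> 0) ->
  forall i, normc (u k i 0) @[k --> \oo] --> 0.
Proof.
move=> z1 u_rec e0 i; apply: (cvg0_contraction (c := normc z)) (e0 i) => [k||k].
- exact: normc_ge0.
- by rewrite normc_ge0.
- have -> : u k.+1 = z *: u k + (W - z%:M) *m u k.
    by rewrite u_rec mulmxBl mul_scalar_mx addrC subrK.
  by rewrite !mxE -Normc.normcM le_normcD.
Qed.

Lemma orbit_normc_cvg0_prod (zs : seq R[i]) (u : nat -> 'cV[R[i]]_n) :
  (forall z, z \in zs -> normc z < 1) -> (forall k, u k.+1 = W *m u k) ->
  (forall i, normc (((\prod_(z <- zs) (W - z%:M)) *m u k) i 0)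
               @[k --> \oo] --> 0) ->
  forall i, normc (u k i 0) @[k --> \oo] --> 0.
Proof.
elim: zs u => [|z zs IH] u zs1 u_rec P0.
  by move=> i; have := P0 i; under eq_fun do rewrite big_nil mul1mx.
apply: IH => [w w_zs|//|]; first by apply: zs1; rewrite in_cons w_zs orbT.
set P := \prod_(w <- zs) (W - w%:M).
have PW : P *m W = W *m P.
  apply/esym/commr_prod => w _; apply: commrB => //.
  by rewrite /GRing.comm -!mulmxE scalar_mxC.
apply: (@orbit_normc_cvg0_factor z (fun k => P *m u k)).
- by apply: zs1; rewrite mem_head.
- by move=> k; rewrite u_rec mulmxA PW mulmxA.
- by move=> i; under eq_fun do rewrite mulmxA; have := P0 i; rewrite big_cons.
Qed.

End ComplexOrbits.

Lemma spectral_radius_lt1_cvg0 n (M : 'M[R]_n) (y : 'cV[R]_n) :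
  spectral_radius M < 1 -> M ^+ k *m y @[k --> \oo] --> (0 : 'cV[R]_n).
Proof.
case: n M y => [|n] M y M1.
  by under eq_fun do rewrite flatmx0; apply: cvg_cst.
have [rs rsE] := closed_field_poly_normal (char_poly (Mc M)).
rewrite (monicP (char_poly_monic _)) scale1r in rsE.
have rs1 z : z \in rs -> normc z < 1.
  move=> z_rs; apply: (proj1 (spectral_radius_ltP M (@ltr01 R)) M1).
  by rewrite rsE root_prod_XsubC.
(* Cayley-Hamilton: the factors [Mc M - z%:M] of the characteristic
   polynomial multiply to 0; they are peeled off one by one. *)
have CH : \prod_(z <- rs) (Mc M - z%:M) = 0.
  rewrite -(Cayley_Hamilton (Mc M)) rsE rmorph_prod; apply: eq_bigr => z _.
  by rewrite rmorphB /= horner_mx_X horner_mx_C.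
have orbitE k i : (Mc M ^+ k *m Mc y) i 0 = ((M ^+ k *m y) i 0)%:C%C.
  by rewrite -rmorphXn -map_mxM mxE.
have orbit0 i : normc ((Mc M ^+ k *m Mc y) i 0) @[k --> \oo] --> 0.
  apply: orbit_normc_cvg0_prod rs1 _ _ i => [k|i'].
    by rewrite exprS mulmxA.
  by rewrite CH; under eq_fun do rewrite mul0mx mxE Normc.normc0; apply: cvg_cst.
apply: cvg0_entries => i j; rewrite (ord1 j); apply/norm_cvg0P.
by have := orbit0 i; under eq_fun do rewrite orbitE normc_real.
Qed.

Lemma cvg0_root_normc_lt1 n (M : 'M[R]_n) lam :
  (forall y : 'cV[R]_n, M ^+ k *m y @[k --> \oo] --> (0 : 'cV[R]_n)) ->
  root (char_poly (Mc M)) lam -> normc lam < 1.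
Proof.
move=> M0; rewrite -eigenvalue_root_char => /eigenvalueP[v vM v0].
have [j vj0] : exists j, v 0 j != 0.
  apply/existsP; apply: contraNT v0 => /existsPn v0.
  by apply/eqP/rowP => j; rewrite mxE; apply/eqP/negPn/v0.
rewrite ltNge; apply/negP => lam1.
pose x k : 'cV[R]_n := M ^+ k *m delta_mx j 0.
pose C := \sum_i normc (v 0 i).
(* Reading the left eigenvector equation [v *m M^k = lam^k v] at column [j]. *)
have vx k : normc (v 0 j) <= C * `|x k|.
  have vMk : v *m Mc M ^+ k = lam ^+ k *: v.
    elim: k => [|k IH]; first by rewrite expr0 mulmx1 scale1r.
    by rewrite exprSr mulmxA IH -scalemxAl vM scalerA -exprSr.
  have : (v *m Mc M ^+ k) 0 j = \sum_i v 0 i * (x k i 0)%:C%C.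
    by rewrite mxE; apply: eq_bigr => i _; rewrite /x -colE -rmorphXn !mxE.
  rewrite vMk mxE => /(congr1 (@Normc.normc _)); rewrite Normc.normcM normcX => vjE.
  have vj_le : normc (v 0 j) <= normc lam ^+ k * normc (v 0 j).
    by rewrite ler_peMl ?normc_ge0 ?exprn_ege1.
  apply: le_trans vj_le _; rewrite vjE mulr_suml.
  apply: le_trans (normc_sum_le _ (fun i => v 0 i * (x k i 0)%:C%C)) _.
  apply: ler_sum => i _; rewrite Normc.normcM normc_real ler_wpM2l ?normc_ge0 //.
  exact: mx_norm_entry_le.
have /cvgr0Pnorm_lt/(_ _ (normc_gt0 vj0)) : C * `|x k| @[k --> \oo] --> 0.
  by rewrite -(mulr0 C); apply: cvgMl_tmp; apply/norm_cvg0P; apply: M0.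
case=> N _ /(_ N (leqnn N)) /=; rewrite ger0_norm ?mulr_ge0 ?sumr_ge0 // => [|i _].
  by rewrite ltNge vx.
exact: normc_ge0.
Qed.

Lemma spectral_radius_lt1P n (M : 'M[R]_n) :
  spectral_radius M < 1 <->
  forall y : 'cV[R]_n, M ^+ k *m y @[k --> \oo] --> (0 : 'cV[R]_n).
Proof.
split=> [M1 y|M0]; first exact: spectral_radius_lt1_cvg0.
by apply/spectral_radius_ltP => // lam; apply: cvg0_root_normc_lt1.
Qed.

End SpectralRadius.

Lemma closed_approx (R : realType) (V : normedModType R) (A : set V) (p : V) :
  closed A -> (forall e : R, 0 < e -> exists2 x, A x & `|p - x| < e) -> A p.
Proof.
move=> Acl pA; apply: Acl => B /nbhs_ballP[e /= e0 eB].
have [x Ax px] := pA e e0; exists x; split => //; apply: eB.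
by rewrite -ball_normE.
Qed.

Lemma cV_bounded_cluster (R : realType) n (u : nat -> 'cV[R]_n) (B : R) :
  (forall k, `|u k| <= B) ->
  exists p, forall e : R, 0 < e -> forall N, exists2 k, (N <= k)%N & `|p - u k| < e.
Proof.
move=> uB; pose box := [set v : 'rV[R]_n | forall i, `[-B, B] (v ord0 i)].
have box_compact : compact box.
  by apply: (@rV_compact _ _ (fun=> `[-B, B])) => i; apply: segment_compact.
have ut_box : ((fun k => (u k)^T) @ \oo) box.
  exists 0%N => // k _ i; rewrite /= mxE in_itv /= -ler_norml.
  exact: le_trans (mx_norm_entry_le _ _ _) (uB k).
have [q [_ q_cluster]] := box_compact _ _ ut_box.
exists q^T => e e0 N.
have uN : ((fun k => (u k)^T) @ \oo) ((fun k => (u k)^T) @` [set k | (N <= k)%N]).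
  by exists N => // k /= Nk; exists k.
have [_ [[k /= Nk <-]]] := q_cluster _ _ uN (nbhsx_ballx q e e0).
by rewrite -ball_normE /= -mx_norm_trmx linearB /= trmxK; exists k.
Qed.

Section Cones.
Variables (R : realType) (n : nat) (K : set 'cV[R]_n).
Hypothesis K_cone : is_cone K.

Lemma cone0 x : K x -> K 0.
Proof. by move=> Kx; rewrite -(scale0r x); apply: K_cone. Qed.

Lemma solid_cone_span :
  is_solid K -> forall y, exists y1 y2, [/\ K y1, K y2 & y = y1 - y2].
Proof.
move=> [e /nbhs_ballP[d /= d0 dK]] y.
pose t := d / (`|y| + 1).
have t0 : 0 < t by rewrite divr_gt0 // ltr_wpDl.
exists (t^-1 *: (e + t *: y)), (t^-1 *: e); split.
- apply: K_cone; first by rewrite invr_ge0 ltW.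
  apply: dK; rewrite -ball_normE /= opprD addrA subrr sub0r normrN normrZ gtr0_norm //.
  by rewrite /t mulrAC ltr_pdivrMr ?ltr_wpDl // ltr_pM2l // ltrDl.
- by apply: K_cone; [rewrite invr_ge0 ltW | apply: dK; apply: ballxx].
- by rewrite -scalerBr addrC addKr scalerA mulVf ?gt_eqF // scale1r.
Qed.

Hypothesis K_convex : is_convex K.

Lemma cone_add x y : K x -> K y -> K (x + y).
Proof.
move=> Kx Ky; have h20 : (0 : R) <= 2^-1 by rewrite invr_ge0.
have h21 : (2^-1 : R) <= 1 by rewrite invf_le1 // ler1n.
have := K_cone (ler0n _ 2) (K_convex h20 h21 Kx Ky).
have -> : (1 - 2^-1 : R) = 2^-1 by field.
by rewrite scalerDr !scalerA mulfV ?pnatr_eq0 // !scale1r.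
Qed.

Lemma cone_increasing (a : nat -> 'cV[R]_n) m k :
  (forall k, K (a k.+1 - a k)) -> (m <= k)%N -> K (a k - a m).
Proof.
move=> a_incr /subnKC <-; elim: (k - m)%N => [|j IH].
  by rewrite addn0 subrr; apply: cone0 (a_incr m).
rewrite addnS -(subrK (a (m + j)%N) (a _)) -addrA.
exact: cone_add.
Qed.

Lemma K_nonneg_add (M N : 'M[R]_n) :
  K_nonneg K M -> K_nonneg K N -> K_nonneg K (M + N).
Proof.
by move=> KM KN x Kx; rewrite mulmxDl; apply: cone_add; [apply: KM | apply: KN].
Qed.

Lemma K_nonneg_mul (M N : 'M[R]_n) :
  K_nonneg K M -> K_nonneg K N -> K_nonneg K (M *m N).
Proof. by move=> KM KN x Kx; rewrite -mulmxA; apply/KM/KN. Qed.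

Lemma K_nonneg_exp (M : 'M[R]_n) k : K_nonneg K M -> K_nonneg K (M ^+ k).
Proof.
move=> KM; elim: k => [|k IH]; first by move=> x Kx; rewrite expr0 mul1mx.
by rewrite exprS; apply: K_nonneg_mul.
Qed.

Lemma K_nonneg_sum (I : Type) (s : seq I) (F : I -> 'M[R]_n) :
  (forall i, K_nonneg K (F i)) -> K_nonneg K (\sum_(i <- s) F i).
Proof.
move=> KF; elim: s => [|i s IH] x Kx; first by rewrite big_nil mul0mx; apply: cone0 Kx.
by rewrite big_cons; apply: K_nonneg_add.
Qed.

End Cones.

Section ClosedPointedCones.
Variables (R : realType) (n : nat) (K : set 'cV[R]_n).
Hypotheses (K_cone : is_cone K) (K_closed : closed K) (K_pointed : is_pointed K).

Lemma closed_pointed_cone_sep :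
  exists2 d : R, 0 < d & forall x z, K x -> K z -> `|x| = 1 -> d <= `|x + z|.
Proof.
(* Otherwise there are x_k, z_k in K with |x_k| = 1 and x_k + z_k -> 0, and a
   cluster point p of the x_k lies in K and in -K. *)
apply: contrapT => no_d.
have xz_ex k : exists xz : 'cV[R]_n * 'cV[R]_n,
    [/\ K xz.1, K xz.2, `|xz.1| = 1 & `|xz.1 + xz.2| < k.+1%:R^-1].
  apply: contrapT => no_xz; apply: no_d; exists k.+1%:R^-1 => // x z Kx Kz x1.
  by rewrite leNgt; apply/negP => xz_lt; apply: no_xz; exists (x, z).
have [xz xzP] := choice xz_ex.
have x1 k : `|(xz k).1| <= 1 by case: (xzP k) => _ _ ->.
have [p p_cluster] := cV_bounded_cluster x1.
have Kp : K p.
  apply: closed_approx => // e e0; have [k _ pk] := p_cluster e e0 0%N.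
  by exists (xz k).1 => //; case: (xzP k).
have Knp : K (- p).
  apply: closed_approx => // e e0; have e20 : 0 < e / 2 by rewrite divr_gt0.
  have [N NE] : exists N : nat, 2 / e < N%:R.
    by exists (Num.Def.archi_bound (2 / e)); apply: archi_boundP; rewrite ltW // divr_gt0.
  have [k Nk pk] := p_cluster _ e20 N; case: (xzP k) => _ Kz _ xz_small.
  exists (xz k).2 => //.
  have -> : - p - (xz k).2 = ((xz k).1 - p) - ((xz k).1 + (xz k).2).
    by rewrite opprD addrA [(xz k).1 - p]addrC addrK.
  apply: le_lt_trans (ler_normB _ _) _; rewrite distrC.
  suff kE : k.+1%:R^-1 <= e / 2.
    by apply: lt_le_trans (ltrD pk (lt_le_trans xz_small kE)) _; rewrite -splitr.
  rewrite -[e / 2]invf_div lef_pV2 ?posrE ?divr_gt0 //.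
  by apply: le_trans (ltW NE) _; rewrite ler_nat leqW.
have [k _] := p_cluster 1 ltr01 0%N.
by rewrite (K_pointed Kp Knp) sub0r normrN; case: (xzP k) => _ _ ->; rewrite ltxx.
Qed.

Lemma closed_pointed_cone_normal :
  exists2 C : R, 0 < C & forall x y, K x -> K (y - x) -> `|x| <= C * `|y|.
Proof.
have [d d0 dK] := closed_pointed_cone_sep.
exists d^-1; first by rewrite invr_gt0.
move=> x y Kx Kyx.
have [->|x0] := eqVneq x 0.
  by rewrite normr0 mulr_ge0 // invr_ge0 ltW.
have nx0 : 0 < `|x| by rewrite normr_gt0.
have nx0' : 0 <= `|x|^-1 by rewrite invr_ge0 ltW.
have := dK (`|x|^-1 *: x) (`|x|^-1 *: (y - x)) (K_cone nx0' Kx) (K_cone nx0' Kyx).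
rewrite -scalerDr [x + _]addrC subrK !normrZ ger0_norm // mulVf ?gt_eqF //.
by move=> /(_ erefl); rewrite !ler_pdivlMl // mulrC.
Qed.

Hypothesis K_convex : is_convex K.

Lemma cone_monotone_cvg (a : nat -> 'cV[R]_n) (b : 'cV[R]_n) :
  (forall k, K (a k.+1 - a k)) -> (forall k, K (b - a k)) ->
  exists l : 'cV[R]_n, a @ \oo --> l.
Proof.
move=> a_incr a_le; have [C C0 CK] := closed_pointed_cone_normal.
have a_bdd k : `|a k| <= `|a 0%N| + C * `|b - a 0%N|.
  have -> : a k = a 0%N + (a k - a 0%N) by rewrite addrC subrK.
  apply: le_trans (ler_normD _ _) _; rewrite lerD2l; apply: CK.
    exact: (cone_increasing K_cone K_convex).
  by rewrite opprB addrA subrK.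
have [p p_cluster] := cV_bounded_cluster a_bdd.
have Kpa m : K (p - a m).
  apply: closed_approx => // e e0; have [k mk pk] := p_cluster e e0 m.
  exists (a k - a m); last by rewrite opprB addrA subrK.
  exact: (cone_increasing K_cone K_convex).
have pa_le m k : (m <= k)%N -> `|p - a k| <= C * `|p - a m|.
  move=> mk; apply: CK (Kpa k) _.
  by rewrite opprB addrC addrA subrK; apply: (cone_increasing K_cone K_convex).
exists p; apply/cvgrPdist_lt => e e0.
have [m _ pm] := p_cluster (e / C) (divr_gt0 e0 C0) 0%N.
exists m => // k /= mk; apply: le_lt_trans (pa_le m k mk) _.
by rewrite -ltr_pdivlMl // mulrC.
Qed.

End ClosedPointedCones.

Section GeometricSum.
Variables (T : pzRingType) (n : nat) (M : 'M[T]_n).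

Lemma mulmx_1B_sum_exp m : (1 - M) *m \sum_(i < m) M ^+ i = 1 - M ^+ m.
Proof. by rewrite -opprB mulmxE mulNr -subrX1 opprB. Qed.

Lemma mulmx_sum_exp_1B m : (\sum_(i < m) M ^+ i) *m (1 - M) = 1 - M ^+ m.
Proof.
rewrite -mulmx_1B_sum_exp mulmxE; apply/commr_sym/commr_sum => i _.
apply/commr_sym/commrB; first exact: commr1.
exact/commr_sym/commrX/commr_refl.
Qed.

End GeometricSum.

Section Splittings.
Variables (R : realType) (n : nat) (K : set 'cV[R]_n).

Lemma unitmx_1B_exp (H : 'M[R]_n) s :
  spectral_radius H < 1 -> (0 < s)%N -> (1 - H ^+ s) \in unitmx.
Proof.
move=> H1 s0; rewrite unitmxE unitfE -det_tr; apply/negP => /det0P[v v0].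
move=> /(congr1 trmx); rewrite trmx_mul trmxK trmx0 mulmxBl mul1mx => /eqP.
rewrite subr_eq0 => /eqP Hv; have Hsk k : H ^+ (s * k) *m v^T = v^T.
  by elim: k => [|k IH]; rewrite ?muln0 ?mul1mx // mulnS exprD -mulmxA IH -Hv.
have /cvgr0Pnorm_lt/(_ `|v^T|) := spectral_radius_lt1_cvg0 v^T H1.
rewrite mx_norm_trmx normr_gt0 => /(_ v0)[N _ /(_ (s * N)%N)].
by rewrite Hsk mx_norm_trmx ltxx => /(_ (leq_pmull N s0)).
Qed.

Hypotheses (K_cone : is_cone K) (K_convex : is_convex K) (K_closed : closed K).

Lemma inv_nonneg_of_convergent_splitting (A U V : 'M[R]_n) :
  A \in unitmx -> A = U - V -> U \in unitmx ->
  K_nonneg K (invmx U) -> K_nonneg K (invmx U *m V) ->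
  convergent_splitting U V -> K_nonneg K (invmx A).
Proof.
move=> A_unit AUV U_unit KUi KW UV1 y Ky.
set W := invmx U *m V; set w := invmx A *m y.
have partial_sumE N : (\sum_(k < N) W ^+ k) *m (invmx U *m y) = w - W ^+ N *m w.
  have UA : invmx U *m A = 1 - W by rewrite AUV mulmxBr mulVmx.
  rewrite -[y in LHS](mulKVmx A_unit) (mulmxA (invmx U)) -/w UA mulmxA.
  by rewrite mulmx_sum_exp_1B mulmxBl mul1mx.
apply: (closed_cvg (F := \oo) (u_ := fun N => w - W ^+ N *m w) K K_closed).
  near=> N; rewrite -partial_sumE.
  by apply: K_nonneg_sum (KUi _ Ky) => // k; apply: K_nonneg_exp.
rewrite -[X in _ --> X]subr0; apply: cvgB; first exact: cvg_cst.
exact: spectral_radius_lt1_cvg0.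
Unshelve. all: by end_near.
Qed.

Hypotheses (K_pointed : is_pointed K) (K_solid : is_solid K).

Lemma weak_regular_II_convergent (A B C : 'M[R]_n) :
  A \in unitmx -> K_weak_regular_splitting_II K A B C -> K_nonneg K (invmx A) ->
  spectral_radius (C *m invmx B) < 1.
Proof.
move=> A_unit [ABC B_unit KBi KX] KAi; apply/spectral_radius_lt1P.
set X := C *m invmx B.
have AiX : invmx A *m (1 - X) = invmx B.
  by rewrite -(mulKmx A_unit (invmx B)) ABC mulmxBl mulmxV.
suff orbitK y : K y -> X ^+ k *m y @[k --> \oo] --> (0 : 'cV[R]_n).
  move=> y; have [y1 [y2 [K1 K2 ->]]] := solid_cone_span K_cone K_solid y.
  under eq_fun do rewrite mulmxBr.
  by rewrite -(subr0 0); apply: cvgB; apply: orbitK.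
move=> Ky; pose a k := invmx B *m ((\sum_(j < k) X ^+ j) *m y).
have a_incr k : a k.+1 - a k = invmx B *m (X ^+ k *m y).
  by rewrite /a big_ord_recr /= mulmxDl mulmxDr addrC addKr.
have a_le k : invmx A *m y - a k = invmx A *m (X ^+ k *m y).
  rewrite /a -AiX -mulmxA (mulmxA (1 - X)) mulmx_1B_sum_exp.
  by rewrite mulmxBl mul1mx mulmxBr opprB addrC subrK.
have KXy k : K (X ^+ k *m y) by apply: K_nonneg_exp.
have [l a_l] : exists l : 'cV[R]_n, a @ \oo --> l.
  apply: (cone_monotone_cvg K_cone K_closed K_pointed K_convex (b := invmx A *m y)).
    by move=> k; rewrite a_incr; apply: KBi.
  by move=> k; rewrite a_le; apply: KAi.
have da0 : a k.+1 - a k @[k --> \oo] --> (0 : 'cV[R]_n).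
  by rewrite -(subrr l); apply: cvgB => //; rewrite cvg_shiftS.
have -> : (fun k => X ^+ k *m y) = (fun k => B *m (a k.+1 - a k)).
  by apply/funext => k; rewrite a_incr mulKVmx.
exact: cvg0_mulmx.
Qed.

End Splittings.

Section TwoStage.
Variables (R : realType) (n : nat) (V F G : 'M[R]_n) (s : nat).
Hypothesis F_unit : F \in unitmx.

Local Notation P := (G *m invmx F).
Local Notation Q := (V *m invmx F).

Definition two_stage_X := P ^+ s + \sum_(j < s) P ^+ j *m Q.

Definition two_stage_precond := invmx F *m \sum_(j < s) P ^+ j.

Lemma mulmx_exp_swap j : F *m (invmx F *m G) ^+ j = P ^+ j *m F.
Proof.
elim: j => [|j IH]; first by rewrite !expr0 mulmx1 mul1mx.
rewrite !exprSr mulmxA IH -!mulmxA; congr (_ *m _).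
by rewrite mulKVmx // mulVmx ?mulmx1.
Qed.

Lemma two_stage_T_conj : F *m two_stage_T V F G s = two_stage_X *m F.
Proof.
rewrite /two_stage_T /two_stage_X mulmxDr mulmxDl mulmx_exp_swap.
rewrite mulmx_sumr mulmx_suml; congr (_ + _); apply: eq_bigr => j _.
by rewrite !mulmxA mulmx_exp_swap -!mulmxA mulKVmx // mulVmx ?mulmx1.
Qed.

Lemma two_stage_T_exp k :
  two_stage_T V F G s ^+ k = invmx F *m two_stage_X ^+ k *m F.
Proof.
have TE : two_stage_T V F G s = invmx F *m two_stage_X *m F.
  by rewrite -mulmxA -two_stage_T_conj mulKmx.
elim: k => [|k IH]; first by rewrite !expr0 mulmx1 mulVmx.
rewrite exprSr -mulmxE IH TE -!mulmxA mulKVmx // (mulmxA (_ ^+ k)).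
by rewrite mulmxE -exprSr mulrA.
Qed.

Lemma two_stage_precond_unit :
  spectral_radius (invmx F *m G) < 1 -> (0 < s)%N -> two_stage_precond \in unitmx.
Proof.
move=> H1 s0; have : (1 - P) *m \sum_(j < s) P ^+ j \in unitmx.
  rewrite mulmx_1B_sum_exp.
  have -> : 1 - P ^+ s = F *m (1 - (invmx F *m G) ^+ s) *m invmx F.
    rewrite mulmxBr mulmxBl mulmx1 mulmxV // mulmx_exp_swap.
    by rewrite -mulmxA mulmxV ?mulmx1.
  by rewrite !unitmx_mul F_unit unitmx_1B_exp // unitmx_inv F_unit.
by rewrite unitmx_mul unitmx_mul unitmx_inv F_unit => /andP[].
Qed.

Section Nonneg.
Variable K : set 'cV[R]_n.
Hypotheses (K_cone : is_cone K) (K_convex : is_convex K) (KP : K_nonneg K P).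

Lemma two_stage_precond_nonneg :
  K_nonneg K (invmx F) -> K_nonneg K two_stage_precond.
Proof.
move=> KFi; apply: K_nonneg_mul => //.
by apply: K_nonneg_sum => // j; apply: K_nonneg_exp.
Qed.

Lemma two_stage_X_nonneg : K_nonneg K Q -> K_nonneg K two_stage_X.
Proof.
move=> KQ; apply: K_nonneg_add => //; first exact: K_nonneg_exp.
by apply: K_nonneg_sum => // j; apply: K_nonneg_mul => //; apply: K_nonneg_exp.
Qed.

End Nonneg.

Lemma two_stage_precond_split (A U : 'M[R]_n) :
  A = U - V -> U = F - G -> V *m invmx F *m G = G *m invmx F *m V ->
  A *m two_stage_precond = 1 - two_stage_X.
Proof.
move=> AUV UFG VG_GV; have QP j : Q *m P ^+ j = P ^+ j *m Q.
  apply/commrX; rewrite /GRing.comm -!mulmxE.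
  by rewrite !mulmxA VG_GV.
rewrite /two_stage_precond /two_stage_X mulmxA AUV UFG !mulmxBl mulmxV //.
rewrite -mulmxBl -[1%:M]/(1 : 'M[R]_n) mulmx_1B_sum_exp mulmx_sumr opprD addrA.
by congr (_ - _); apply: eq_bigr => j _; rewrite QP.
Qed.

End TwoStage.

Theorem theorem3p3 (R : realType) (n : nat) (K : set 'cV[R]_n)
  (A U V F G : 'M[R]_n) :
  proper_cone K ->
  A \in unitmx ->
  K_regular_splitting K A U V -> convergent_splitting U V ->
  K_weak_regular_splitting_II K U F G -> convergent_splitting F G ->
  V *m invmx F *m G = G *m invmx F *m V ->
  forall s : nat, (0 < s)%N -> spectral_radius (two_stage_T V F G s) < 1.
Proof.
move=> [K_cone K_closed K_convex K_pointed K_solid] A_unit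
  [AUV U_unit KUi KV] UV1 [UFG F_unit KFi KP] FG1 VG_GV s s0.
have KAi : K_nonneg K (invmx A).
  apply: (inv_nonneg_of_convergent_splitting K_cone K_convex K_closed A_unit AUV) => //.
  exact: K_nonneg_mul.
set M := two_stage_precond F G s; set X := two_stage_X V F G s.
have M_unit : M \in unitmx by apply: two_stage_precond_unit.
have XE : (invmx M - A) *m invmx (invmx M) = X.
  rewrite invmxK mulmxBl mulVmx // (two_stage_precond_split s F_unit AUV UFG VG_GV).
  by rewrite opprB addrC subrK.
have X1 : spectral_radius X < 1.
  rewrite -XE; apply: (weak_regular_II_convergent K_cone K_convex K_closed
    K_pointed K_solid A_unit _ KAi).
  split; [by rewrite opprB addrC subrK | by rewrite unitmx_inv | |].
    by rewrite invmxK; apply: two_stage_precond_nonneg.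
  by rewrite XE; apply: two_stage_X_nonneg => //; apply: K_nonneg_mul.
apply/spectral_radius_lt1P => y; under eq_fun do rewrite two_stage_T_exp // -!mulmxA.
by apply: cvg0_mulmx; move/spectral_radius_lt1P : X1; apply.
Qed.
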